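(* Let $\bm v_1, \dots, \bm v_N \in \mathbb{S}^{r-1}$ span $\mathbb{R}^r$, let $\bm V \in \mathbb{R}^{r\times N}$ have the $\bm v_i$ as columns, let $\bm v := \mathrm{vec}(\bm V)$, and let $\bm M^\star \in \mathcal{B}(N,r)$ satisfy $\bm v^\top \bm M^\star \bm v = N^2$. Then every eigenvector of $\bm M^\star$ with nonzero eigenvalue lies in $$V_{\mathrm{sym}} := \{\mathrm{vec}(\bm S \bm V) : \bm S \in \mathbb{R}^{r\times r}_{\mathrm{sym}}\} \subset \mathbb{R}^{rN}.$$ Moreover, $\bm v$ is an eigenvector of $\bm M^\star$ with eigenvalue $N$, and every eigenvector of $\bm M^\star$ with nonzero eigenvalue that is orthogonal to $\bm v$ lies in $$V'_{\mathrm{sym}} := \{\mathrm{vec}(\bm S \bm V) : \bm S \in \mathbb{R}^{r\times r}_{\mathrm{sym}},\ \bm v_i^\top \bm S \bm v_i = 0 \text{ for all } i\in[N]\}.$$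
   Context: $\mathbb{S}^{r-1}$ is the unit sphere in $\mathbb{R}^r$; $\mathbb{R}^{r\times r}_{\mathrm{sym}}$ is the space of symmetric $r\times r$ real matrices. For $\bm V \in \mathbb{R}^{r\times N}$ with columns $\bm v_i$, $\mathrm{vec}(\bm V) \in \mathbb{R}^{rN}$ is the concatenation $(\bm v_1;\dots;\bm v_N)$. A matrix $\bm M \in \mathbb{R}^{rN\times rN}$ is viewed as an $N\times N$ array of $r\times r$ blocks, $\bm M_{[ij]}$ denoting block $(i,j)$. $\mathcal{B}(N,r)$ is the set of symmetric $\bm M \in \mathbb{R}^{rN\times rN}$ with $\bm M \succeq 0$, $\bm M_{[ii]} = \bm I_r$ for all $i$, and $\bm M_{[ij]} = \bm M_{[ij]}^\top$ for all $i,j$. *)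

(* Real numbers are modelled by an arbitrary real closed field
   (rcfType). *)
From HB Require Import structures.
From mathcomp Require Import all_boot all_order all_algebra.
Set Implicit Arguments. Unset Strict Implicit. Unset Printing Implicit Defensive.
Import Order.TTheory GRing.Theory Num.Theory.
Local Open Scope ring_scope.

(* vec(V) = (v_1; ...; v_N) : the column-stacking of V : r x N.
   Entry (i, a) (column i, coordinate a) sits at index mxvec_index i a = i*r + a. *)
Definition vecc (R : rcfType) (r N : nat) (V : 'M[R]_(r, N)) : 'cV[R]_(N * r) :=
  (mxvec V^T)^T.

Definition blk (R : rcfType) (N r : nat) (M : 'M[R]_(N * r)) (i j : 'I_N) : 'M[R]_r :=
  \matrix_(a < r, b < r) M (mxvec_index i a) (mxvec_index j b).

Definition psd (R : rcfType) (n : nat) (M : 'M[R]_n) : Prop :=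
  M^T = M /\ forall x : 'cV[R]_n, 0 <= (x^T *m M *m x) 0 0.

Definition inB (R : rcfType) (N r : nat) (M : 'M[R]_(N * r)) : Prop :=
  [/\ M^T = M, psd M,
      (forall i : 'I_N, blk M i i = 1%:M) &
      (forall i j : 'I_N, (blk M i j)^T = blk M i j)].

Definition eigvec (R : rcfType) (n : nat) (M : 'M[R]_n) (x : 'cV[R]_n) (lam : R) : Prop :=
  x != 0 /\ M *m x = lam *: x.

Definition symmx (R : rcfType) (r : nat) (S : 'M[R]_r) : Prop := S^T = S.

Definition in_Vsym (R : rcfType) (r N : nat) (V : 'M[R]_(r, N)) (x : 'cV[R]_(N * r)) : Prop :=
  exists S : 'M[R]_r, symmx S /\ x = vecc (S *m V).

Definition in_Vsym' (R : rcfType) (r N : nat) (V : 'M[R]_(r, N)) (x : 'cV[R]_(N * r)) : Prop :=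
  exists S : 'M[R]_r, [/\ symmx S,
     (forall i : 'I_N, ((col i V)^T *m S *m col i V) 0 0 = 0) &
     x = vecc (S *m V)].

(* For i, j let d_ij be the vector with block i equal to v_i, block j equal to
   -v_j and zero blocks elsewhere.  As the diagonal blocks of M are identities,
   d_ij^T M d_ij = 2 - 2 v_i^T M_ij v_j >= 0, while the N^2 numbers
   v_i^T M_ij v_j sum to v^T M v = N^2; so they all equal 1, d_ij lies in the
   kernel of the positive semidefinite M, and M_ij v_j = v_i.  Then the vector
   with v_i in block j and -v_j in block i is in the kernel too.  An eigenvector
   x with nonzero eigenvalue is orthogonal to the kernel, so with x_i its blocks,
   v_i^T x_j is symmetric in (i, j) and v_i^T x_i is constant.  The first fact
   and the full row rank of V give X = S V with S symmetric; the second gives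
   v^T x = N v_i^T x_i. *)

From HB Require Import structures.
From mathcomp Require Import all_boot all_order all_algebra.
From mathcomp Require Import ring lra.
Import Order.TTheory GRing.Theory Num.Theory.
Local Open Scope ring_scope.
Set Implicit Arguments. Unset Strict Implicit. Unset Printing Implicit Defensive.

Section Dot.
Variable R : comPzRingType.

Definition dot n (u w : 'cV[R]_n) : R := (u^T *m w) 0 0.

Lemma dotE n (u w : 'cV[R]_n) : dot u w = \sum_a u a 0 * w a 0.
Proof. by rewrite /dot mxE; apply: eq_bigr => a _; rewrite mxE. Qed.

Lemma dotC n (u w : 'cV[R]_n) : dot u w = dot w u.
Proof. by rewrite !dotE; apply: eq_bigr => a _; rewrite mulrC. Qed.

Lemma dotDl n (u v w : 'cV[R]_n) : dot (u + v) w = dot u w + dot v w.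
Proof. by rewrite !dotE -big_split; apply: eq_bigr => a _; rewrite mxE mulrDl. Qed.

Lemma dotBl n (u v w : 'cV[R]_n) : dot (u - v) w = dot u w - dot v w.
Proof. by rewrite !dotE -sumrB; apply: eq_bigr => a _; rewrite !mxE mulrBl. Qed.

Lemma dotZl n a (u w : 'cV[R]_n) : dot (a *: u) w = a * dot u w.
Proof. by rewrite !dotE mulr_sumr; apply: eq_bigr => b _; rewrite mxE mulrA. Qed.

Lemma dot0l n (w : 'cV[R]_n) : dot 0 w = 0.
Proof. by rewrite dotE big1 // => a _; rewrite mxE mul0r. Qed.

Lemma dotDr n (u v w : 'cV[R]_n) : dot w (u + v) = dot w u + dot w v.
Proof. by rewrite dotC dotDl !(dotC w). Qed.

Lemma dotBr n (u v w : 'cV[R]_n) : dot w (u - v) = dot w u - dot w v.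
Proof. by rewrite dotC dotBl !(dotC w). Qed.

Lemma dotZr n a (u w : 'cV[R]_n) : dot w (a *: u) = a * dot w u.
Proof. by rewrite dotC dotZl dotC. Qed.

Lemma dot_sumr n (I : finType) (F : I -> 'cV[R]_n) w :
  dot w (\sum_i F i) = \sum_i dot w (F i).
Proof.
rewrite dotE; under eq_bigr do rewrite summxE mulr_sumr.
by rewrite exchange_big; apply: eq_bigr => i _; rewrite dotE.
Qed.

Lemma dot_mulmx n (A : 'M[R]_n) u w : dot u (A *m w) = dot (A^T *m u) w.
Proof. by rewrite /dot trmx_mul trmxK mulmxA. Qed.

Lemma trmx_mulmxE m n p (A : 'M[R]_(m, n)) (B : 'M[R]_(m, p)) i j :
  (A^T *m B) i j = dot (col i A) (col j B).
Proof. by rewrite mxE dotE; apply: eq_bigr => a _; rewrite !mxE. Qed.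

End Dot.

Lemma ker_orthogonal_eigen (R : idomainType) n (M : 'M[R]_n) x k lam :
  M^T = M -> M *m x = lam *: x -> lam != 0 -> M *m k = 0 -> dot k x = 0.
Proof.
move=> Msym Mx lam0 Mk; apply/eqP.
have : lam * dot k x = 0 by rewrite -dotZr -Mx dot_mulmx Msym Mk dot0l.
by move/eqP; rewrite mulf_eq0 (negbTE lam0).
Qed.

Section PositiveSemidefinite.
Variables (R : realFieldType) (n : nat).
Implicit Types u : 'cV[R]_n.

Lemma dot_self_ge0 u : 0 <= dot u u.
Proof. by rewrite dotE sumr_ge0 // => a _; rewrite -expr2 sqr_ge0. Qed.

Lemma dot_self_eq0 u : dot u u = 0 -> u = 0.
Proof.
rewrite dotE => /psumr_eq0P u0; apply/colP => a; rewrite mxE.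
have /eqP : u a 0 * u a 0 = 0 by apply: u0 => // b _; rewrite -expr2 sqr_ge0.
by rewrite mulf_eq0 orbb => /eqP.
Qed.

Lemma psd_quad_eq0 (M : 'M[R]_n) e :
  M^T = M -> (forall x, 0 <= dot x (M *m x)) -> dot e (M *m e) = 0 -> M *m e = 0.
Proof.
move=> Msym Mpsd e0; set y := M *m e; set c := dot y y; set q := dot y (M *m y).
have c_ge0 : 0 <= c by exact: dot_self_ge0.
have q_ge0 : 0 <= q by exact: Mpsd.
have eMy : dot e (M *m y) = c by rewrite dot_mulmx Msym.
(* At e - s c M e, with s = 1/(q+1), the form equals -s (1 + s) c^2. *)
set s := (q + 1)^-1.
have s_gt0 : 0 < s by rewrite invr_gt0; lra.
have sq : s * (q + 1) = 1 by rewrite mulVf // lt0r_neq0 //; lra.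
have := Mpsd (e - (s * c) *: y).
rewrite mulmxBr -scalemxAr !dotBl !dotBr !dotZl !dotZr e0 eMy -/c -/q => quad_ge0.
have sqcc : s * (s * q) * (c * c) = s * (1 - s) * (c * c).
  by congr (s * _ * _); rewrite -sq; ring.
have cc_le0 : c * c <= 0 by nra.
apply: dot_self_eq0; apply/eqP; rewrite -/c -sqrf_eq0 expr2 eq_le cc_le0.
by rewrite mulr_ge0.
Qed.

End PositiveSemidefinite.

(* With G a right inverse of V, S := X G works: the symmetry of V^T X and
   V (1 - G V) = 0 force X (1 - G V) = 0. *)
Lemma sym_factor (R : fieldType) r N (V X : 'M[R]_(r, N)) :
  row_free V -> (V^T *m X)^T = V^T *m X -> exists2 S : 'M[R]_r, S^T = S & S *m V = X.
Proof.
move=> /row_freeP[G VG] VXsym.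
have GV : G^T *m V^T = 1%:M by rewrite -trmx_mul VG trmx1.
have XVsym : X^T *m V = V^T *m X by rewrite -VXsym trmx_mul trmxK.
have XGV : X *m G *m V = X.
  have XP : X *m (1%:M - G *m V) = 0.
    rewrite -[X in X *m _]mul1mx -GV -!mulmxA (mulmxA V^T) -XVsym -mulmxA.
    by rewrite mulmxBr mulmx1 (mulmxA V) VG mul1mx subrr !mulmx0.
  by move/eqP: XP; rewrite mulmxBr mulmx1 subr_eq0 mulmxA => /eqP.
exists (X *m G) => //.
by rewrite trmx_mul -[X *m G]mul1mx -GV -mulmxA (mulmxA V^T) -XVsym -mulmxA VG mulmx1.
Qed.

Section Blocks.
Variables (R : rcfType) (r N : nat).
Implicit Types (f g : 'I_N -> 'cV[R]_r) (x : 'cV[R]_(N * r)) (W : 'M[R]_(r, N)).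
Implicit Types M : 'M[R]_(N * r).

Definition unvecc x : 'M[R]_(r, N) := \matrix_(a, i) x (mxvec_index i a) 0.
Definition block x i : 'cV[R]_r := col i (unvecc x).
Definition stack f : 'cV[R]_(N * r) := vecc (\matrix_(a, i) f i a 0).
Definition single i (w : 'cV[R]_r) : 'cV[R]_(N * r) := stack (fun k => (k == i)%:R *: w).

Lemma vecc_index W i a : vecc W (mxvec_index i a) 0 = W a i.
Proof. by rewrite /vecc mxE mxvecE mxE. Qed.

Lemma unveccK x : vecc (unvecc x) = x.
Proof. by apply/colP => k; case/mxvec_indexP: k => i a; rewrite vecc_index mxE. Qed.

Lemma block_stack f i : block (stack f) i = f i.
Proof. by apply/colP => a; rewrite !mxE mxvecE !mxE. Qed.

Lemma stack_block x : stack (block x) = x.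
Proof. by apply/colP => k; case/mxvec_indexP: k => i a; rewrite vecc_index !mxE. Qed.

Lemma vecc_stack W : vecc W = stack (fun i => col i W).
Proof. by apply/colP => k; case/mxvec_indexP: k => i a; rewrite !vecc_index !mxE. Qed.

Lemma eq_stack f g : f =1 g -> stack f = stack g.
Proof. by move=> fg; apply/colP => k; case/mxvec_indexP: k => i a; rewrite !vecc_index !mxE fg. Qed.

Lemma stackZ c f : c *: stack f = stack (fun i => c *: f i).
Proof. by apply/colP => k; case/mxvec_indexP: k => i a; rewrite [LHS]mxE !vecc_index !mxE. Qed.

Lemma block0 i : block 0 i = 0.
Proof. by apply/colP => a; rewrite !mxE. Qed.

Lemma blockB x y i : block (x - y) i = block x i - block y i.
Proof. by apply/colP => a; rewrite !mxE. Qed.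

Lemma sum_mxvec_index (F : 'I_(N * r) -> R) :
  \sum_k F k = \sum_i \sum_a F (mxvec_index i a).
Proof.
rewrite (reindex _ (curry_mxvec_bij _ _)) /=.
by rewrite pair_bigA; apply: eq_bigr => -[i a].
Qed.

Lemma dot_stack f g : dot (stack f) (stack g) = \sum_i dot (f i) (g i).
Proof.
rewrite dotE sum_mxvec_index; apply: eq_bigr => i _; rewrite dotE.
by apply: eq_bigr => a _; rewrite !vecc_index !mxE.
Qed.

Lemma mulmx_stack M g : M *m stack g = stack (fun i => \sum_j blk M i j *m g j).
Proof.
apply/colP => k; case/mxvec_indexP: k => i a.
rewrite vecc_index !mxE sum_mxvec_index summxE; apply: eq_bigr => j _.
by rewrite mxE; apply: eq_bigr => b _; rewrite vecc_index !mxE.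
Qed.

Lemma dot_stack_mulmx M f g :
  dot (stack f) (M *m stack g) = \sum_i \sum_j dot (f i) (blk M i j *m g j).
Proof. by rewrite mulmx_stack dot_stack; apply: eq_bigr => i _; rewrite dot_sumr. Qed.

Lemma dot_single i w x : dot (single i w) x = dot w (block x i).
Proof.
rewrite -{1}(stack_block x) dot_stack (bigD1 i) //= big1 ?addr0.
  by rewrite eqxx scale1r.
by move=> k /negbTE ->; rewrite scale0r dot0l.
Qed.

Lemma mulmx_single M j w : M *m single j w = stack (fun k => blk M k j *m w).
Proof.
rewrite mulmx_stack; apply: eq_stack => k.
rewrite (bigD1 j) //= big1 ?addr0; first by rewrite eqxx scale1r.
by move=> l /negbTE ->; rewrite scale0r mulmx0.
Qed.

Lemma dot_single_mulmx M i j u w :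
  dot (single i u) (M *m single j w) = dot u (blk M i j *m w).
Proof. by rewrite dot_single mulmx_single block_stack. Qed.

Lemma blk_trmx M i j : blk M^T i j = (blk M j i)^T.
Proof. by apply/matrixP => a b; rewrite !mxE. Qed.

End Blocks.

Section CorrelationMatrix.
Variables (R : rcfType) (r N : nat) (V : 'M[R]_(r, N)) (M : 'M[R]_(N * r)).
Hypothesis unit_col : forall i, dot (col i V) (col i V) = 1.
Hypothesis M_in_B : inB M.
Hypothesis quad_vecc : dot (vecc V) (M *m vecc V) = (N ^ 2)%:R.

Let M_sym : M^T = M. Proof. by case: M_in_B. Qed.

Let M_psd x : 0 <= dot x (M *m x).
Proof. by case: M_in_B => _ [_ psdM] _ _; rewrite /dot mulmxA. Qed.

Let blk_diag i : blk M i i = 1%:M. Proof. by case: M_in_B. Qed.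

Let blk_sym i j : blk M j i = blk M i j.
Proof. by case: M_in_B => _ _ _ symM; rewrite -symM -blk_trmx M_sym. Qed.

Let dot_blk_swap i j u w : dot u (blk M j i *m w) = dot w (blk M i j *m u).
Proof. by rewrite dot_mulmx -blk_trmx M_sym dotC. Qed.

Local Notation corr i j := (dot (col i V) (blk M i j *m col j V)).
Local Notation diffv i j := (single i (col i V) - single j (col j V)).

Lemma quad_diffv i j : dot (diffv i j) (M *m diffv i j) = 2 - 2 * corr i j.
Proof.
rewrite mulmxBr !dotBl !dotBr !dot_single_mulmx !blk_diag !mul1mx !unit_col.
by rewrite dot_blk_swap; ring.
Qed.

Lemma corr_le1 i j : corr i j <= 1.
Proof. by have := M_psd (diffv i j); rewrite quad_diffv; lra. Qed.

(* The N^2 correlations are at most 1 and sum to N^2. *)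
Lemma corr_eq1 i j : corr i j = 1.
Proof.
have slack_ge0 k l : 0 <= 1 - corr k l by rewrite subr_ge0 corr_le1.
have corr_sum : \sum_k \sum_l corr k l = (N ^ 2)%:R.
  by rewrite -quad_vecc vecc_stack dot_stack_mulmx.
have : \sum_k \sum_l (1 - corr k l) = 0.
  under eq_bigr do rewrite sumrB sumr_const card_ord.
  by rewrite sumrB corr_sum sumr_const card_ord natrX expr2 mulr_natr subrr.
move/psumr_eq0P => /(_ (fun k _ => sumr_ge0 _ (fun l _ => slack_ge0 k l)) i isT).
move/psumr_eq0P => /(_ (fun l _ => slack_ge0 i l) j isT) /eqP.
by rewrite subr_eq0 => /eqP.
Qed.

Lemma diffv_ker i j : M *m diffv i j = 0.
Proof. by apply: psd_quad_eq0 => //; rewrite quad_diffv corr_eq1; ring. Qed.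

Lemma blk_mul_col i j : blk M i j *m col j V = col i V.
Proof.
have := congr1 (fun y => block y i) (diffv_ker i j).
rewrite /= mulmxBr block0 blockB !mulmx_single !block_stack blk_diag mul1mx.
by move/eqP; rewrite subr_eq0 => /eqP.
Qed.

Lemma swapv_ker i j : M *m (single j (col i V) - single i (col j V)) = 0.
Proof.
apply: psd_quad_eq0 => //.
rewrite mulmxBr !dotBl !dotBr !dot_single_mulmx !blk_diag !mul1mx !unit_col.
by rewrite blk_sym blk_mul_col unit_col -blk_sym blk_mul_col unit_col !subrr.
Qed.

Lemma mulmx_vecc : M *m vecc V = N%:R *: vecc V.
Proof.
rewrite vecc_stack mulmx_stack stackZ; apply: eq_stack => i.
by rewrite (eq_bigr _ (fun j _ => blk_mul_col i j)) sumr_const card_ord scaler_nat.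
Qed.

Section Eigenvector.
Variables (x : 'cV[R]_(N * r)) (lam : R).
Hypotheses (Mx : M *m x = lam *: x) (lam_neq0 : lam != 0).

Lemma eigen_corr_sym i j : dot (col i V) (block x j) = dot (col j V) (block x i).
Proof.
have := ker_orthogonal_eigen M_sym Mx lam_neq0 (swapv_ker i j).
by rewrite dotBl !dot_single => /eqP; rewrite subr_eq0 => /eqP.
Qed.

Lemma eigen_corr_const i j : dot (col i V) (block x i) = dot (col j V) (block x j).
Proof.
have := ker_orthogonal_eigen M_sym Mx lam_neq0 (diffv_ker i j).
by rewrite dotBl !dot_single => /eqP; rewrite subr_eq0 => /eqP.
Qed.

Lemma eigen_sym_factor :
  row_free V -> exists2 S : 'M[R]_r, S^T = S & S *m V = unvecc x.
Proof.
move=> freeV; apply: sym_factor => //; apply/matrixP => i j.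
by rewrite mxE !trmx_mulmxE eigen_corr_sym.
Qed.

Lemma eigen_corr_eq0 : dot (vecc V) x = 0 -> forall i, dot (col i V) (block x i) = 0.
Proof.
move=> vx i; have N_neq0 : N%:R != 0 :> R by rewrite pnatr_eq0 -lt0n (leq_trans _ (ltn_ord i)).
move: vx; rewrite vecc_stack -{1}(stack_block x) dot_stack.
rewrite (eq_bigr _ (fun j _ => eigen_corr_const j i)) sumr_const card_ord => /eqP.
by rewrite -mulr_natr mulf_eq0 (negbTE N_neq0) orbF => /eqP.
Qed.

End Eigenvector.

End CorrelationMatrix.

Theorem lemma2 (R : rcfType) (r N : nat) (V : 'M[R]_(r, N)) (M : 'M[R]_(N * r)) :
  (0 < r)%N ->
  (forall i : 'I_N, ((col i V)^T *m col i V) 0 0 = 1) ->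
  \rank V = r ->
  inB M ->
  ((vecc V)^T *m M *m vecc V) 0 0 = (N ^ 2)%:R ->
  [/\ (forall (x : 'cV[R]_(N * r)) (lam : R), eigvec M x lam -> lam != 0 -> in_Vsym V x),
      eigvec M (vecc V) N%:R &
      (forall (x : 'cV[R]_(N * r)) (lam : R), eigvec M x lam -> lam != 0 ->
         (vecc V)^T *m x = 0 -> in_Vsym' V x)].
Proof.
move=> r_gt0 unit_col rankV M_in_B quadN.
have freeV : row_free V by rewrite /row_free rankV.
have quad_vecc : dot (vecc V) (M *m vecc V) = (N ^ 2)%:R by rewrite /dot mulmxA.
split.
- move=> x lam [_ Mx] lam_neq0.
  have [S symS SV] := eigen_sym_factor unit_col M_in_B quad_vecc Mx lam_neq0 freeV.
  by exists S; rewrite SV unveccK.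
- split; last exact: mulmx_vecc.
  have N_gt0 : (0 < N)%N by rewrite (leq_trans r_gt0) // -rankV rank_leq_col.
  apply/eqP => /(congr1 (fun y => dot y y)).
  rewrite dot0l vecc_stack dot_stack (eq_bigr _ (fun i _ => unit_col i)).
  by rewrite sumr_const card_ord => /eqP; rewrite pnatr_eq0 eqn0Ngt N_gt0.
- move=> x lam [_ Mx] lam_neq0 vx.
  have [S symS SV] := eigen_sym_factor unit_col M_in_B quad_vecc Mx lam_neq0 freeV.
  exists S; split => //; last by rewrite SV unveccK.
  move=> i; rewrite -mulmxA.
  have -> : S *m col i V = block x i by rewrite /block -SV !colE mulmxA.
  apply: (eigen_corr_eq0 unit_col M_in_B quad_vecc Mx lam_neq0).
  by rewrite /dot vx mxE.
Qed.
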